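(* Let $G$ be a graph and $k > \Gamma(G)$ an integer. If $D_k(G)$ is connected, then $D_{k+1}(G)$ is connected.
   Context: All graphs are finite and simple. A set $S \subseteq V(G)$ is a dominating set of $G$ if every vertex of $V(G)\setminus S$ is adjacent to a vertex of $S$; it is a minimal dominating set if no proper subset of it is a dominating set. $\gamma(G)$ is the minimum cardinality of a dominating set of $G$, and $\Gamma(G)$ is the maximum cardinality of a minimal dominating set of $G$. For an integer $k \ge \gamma(G)$, the $k$-dominating graph $D_k(G)$ is the graph whose vertices are the dominating sets of $G$ of cardinality at most $k$, with two such sets $A,B$ adjacent if and only if their symmetric difference $(A\setminus B)\cup(B\setminus A)$ consists of exactly one vertex of $G$. *)

From mathcomp Require Import all_boot.
Set Implicit Arguments. Unset Strict Implicit. Unset Printing Implicit Defensive.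

Definition simple_graph (T : finType) (e : rel T) : Prop :=
  symmetric e /\ irreflexive e.

Definition dominating (T : finType) (e : rel T) (S : {set T}) : bool :=
  [forall v, (v \notin S) ==> [exists u in S, e v u]].

Definition minimal_dominating (T : finType) (e : rel T) (S : {set T}) : bool :=
  dominating e S && [forall S' : {set T}, (S' \proper S) ==> ~~ dominating e S'].

Definition upper_domination (T : finType) (e : rel T) : nat :=
  \max_(S : {set T} | minimal_dominating e S) #|S|.

Definition dk_vertex (T : finType) (e : rel T) (k : nat) (S : {set T}) : bool :=
  dominating e S && (#|S| <= k).

Definition dk_adj (T : finType) (e : rel T) (k : nat) : rel {set T} :=
  fun A B => [&& dk_vertex e k A, dk_vertex e k B &
              #|(A :\: B) :|: (B :\: A)| == 1].

Definition dk_connected (T : finType) (e : rel T) (k : nat) : Prop :=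
  forall A B : {set T}, dk_vertex e k A -> dk_vertex e k B ->
    connect (dk_adj e k) A B.

From mathcomp Require Import all_boot.
Set Implicit Arguments. Unset Strict Implicit. Unset Printing Implicit Defensive.

(* D_k(G) is an induced subgraph of D_(k+1)(G), so every path of
   D_k(G) is a path of D_(k+1)(G).  It therefore suffices to join each vertex A
   of D_(k+1)(G) to some vertex of D_k(G) inside D_(k+1)(G).  If |A| <= k there
   is nothing to do.  Otherwise |A| = k+1 > Gamma(G), so A is not a minimal
   dominating set: some proper dominating subset misses a vertex x of A, and
   then A \ x is still dominating (domination is upward closed).  The set A \ x
   has k elements and differs from A by the single vertex x, hence it is a
   neighbour of A in D_(k+1)(G) lying in D_k(G).  Since adjacency in D_k(G) is
   symmetric, connectivity of D_(k+1)(G) follows by concatenating paths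
   A -> A' ~> B' -> B, the middle part taken in D_k(G). *)

Section Domination.

Variables (T : finType) (e : rel T).

Lemma dominating_superset (S S' : {set T}) :
  dominating e S -> S \subset S' -> dominating e S'.
Proof.
move=> /forallP domS sub; apply/forallP => v; apply/implyP => vS'.
have vS : v \notin S by apply: contra vS'; apply: (subsetP sub).
have /existsP [u /andP [uS evu]] := implyP (domS v) vS.
by apply/existsP; exists u; rewrite (subsetP sub u uS).
Qed.

Lemma minimal_dominating_card (S : {set T}) :
  minimal_dominating e S -> #|S| <= upper_domination e.
Proof. exact: (@leq_bigmax_cond _ _ (fun A : {set T} => #|A|)). Qed.

Lemma removable_vertex (S : {set T}) :
  dominating e S -> ~~ minimal_dominating e S ->
  exists2 x, x \in S & dominating e (S :\ x).
Proof.
rewrite /minimal_dominating => -> /= /forallPn [S'].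
rewrite negb_imply negbK => /andP [/properP [sub [x xS xS']] domS'].
exists x => //; apply: dominating_superset domS' _.
apply/subsetP => y yS'; rewrite !inE (subsetP sub y yS') andbT.
by apply: contraNneq xS' => <-.
Qed.

End Domination.

Section DominatingGraph.

Variables (T : finType) (e : rel T).

Lemma dk_adj_sym (k : nat) : symmetric (dk_adj e k).
Proof. by move=> A B; rewrite /dk_adj setUC andbCA. Qed.

Lemma connect_dk_succ (k : nat) (A B : {set T}) :
  connect (dk_adj e k) A B -> connect (dk_adj e k.+1) A B.
Proof.
apply: connect_sub => X Y /and3P [/andP [dX cX] /andP [dY cY] sdXY].
apply: connect1; rewrite /dk_adj /dk_vertex dX dY sdXY.
by rewrite (leq_trans cX) ?(leq_trans cY).
Qed.

Lemma symdiff_setD1 (A : {set T}) (x : T) :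
  x \in A -> (A :\: (A :\ x)) :|: ((A :\ x) :\: A) = [set x].
Proof.
move=> xA; apply/setP => y; rewrite !inE.
by case: (eqVneq y x) => [->|] //=; rewrite ?xA //; case: (y \in A).
Qed.

Lemma reach_dk (k : nat) (A : {set T}) :
  upper_domination e < k -> dk_vertex e k.+1 A ->
  exists2 B, dk_vertex e k B & connect (dk_adj e k.+1) A B.
Proof.
move=> Gamma_lt_k /andP [domA cardA].
have [small | large] := leqP #|A| k.
  by exists A; rewrite /dk_vertex ?domA ?small.
have cardAk : #|A| = k.+1 by apply/eqP; rewrite eqn_leq cardA large.
have notmin : ~~ minimal_dominating e A.
  apply/negP => /minimal_dominating_card; rewrite cardAk => le_kGamma.
  by have := leq_ltn_trans le_kGamma Gamma_lt_k; rewrite ltnNge leqnSn.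
have [x xA domAx] := removable_vertex domA notmin.
have cardAx : #|A :\ x| = k.
  by move: (cardsD1 x A); rewrite xA cardAk add1n => -[].
have vAx : dk_vertex e k (A :\ x) by rewrite /dk_vertex domAx cardAx leqnn.
exists (A :\ x) => //; apply: connect1.
by rewrite /dk_adj /dk_vertex domA cardA domAx cardAx leqnSn symdiff_setD1 ?cards1.
Qed.

End DominatingGraph.

Theorem lemma4 (T : finType) (e : rel T) (k : nat) :
  simple_graph e ->
  upper_domination e < k ->
  dk_connected e k ->
  dk_connected e k.+1.
Proof.
move=> _ Gamma_lt_k connk A B vA vB.
have [A' vA' connAA'] := reach_dk Gamma_lt_k vA.
have [B' vB' connBB'] := reach_dk Gamma_lt_k vB.
have connB'B : connect (dk_adj e k.+1) B' B.
  by rewrite (sym_connect_sym (dk_adj_sym e k.+1)).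
apply: connect_trans connAA' (connect_trans _ connB'B).
exact/connect_dk_succ/connk.
Qed.
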